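(* Under the hypotheses of Theorem 1 (convex $f_i$ with subgradients bounded by $L$, closed convex $\Omega$, $W$ nonnegative doubly stochastic with positive diagonal and strongly connected positive-entry graph, second-largest singular value $\sigma<1$; positive nonincreasing step-sizes $\alpha(t)$, square summable but not summable, with $\sum_{k=1}^t\alpha(k)\le C_\alpha\sum_{k=\lceil t/2\rceil}^t\alpha(k)$ and $\alpha(\lfloor t/2\rfloor)\le C_\alpha'\alpha(t)$ for all $t$; iteration $x(t+1)=W P_\Omega[x(t)-\alpha(t)g(t)]$ with identical initial rows in $\Omega$), there is an absolute constant $c>0$ such that for all $t$ with $$t\ge\frac{c}{1-\sigma}\log\frac{(1-\sigma)\,t\,\alpha_{\max}}{C_\alpha'\alpha(t)}$$ we have $$\|x(t)-\mathbf 1\overline{x}(t)\|_F\le\frac{2C_\alpha'\alpha(t)L\sqrt n}{1-\sigma}.$$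
   Context: $x(t)$ is the $n\times d$ matrix with rows $x_i(t)$; $g(t)$ has rows $g_i(t)$, a subgradient of $f_i$ at $x_i(t)$; $P_\Omega$ is row-wise Euclidean projection onto $\Omega$; $\overline{x}(t)=\frac1n\sum_i x_i(t)$ (a row vector), $\mathbf 1$ is the all-ones column vector in $\mathbb{R}^n$, so $\mathbf 1\overline{x}(t)$ is $n\times d$; $\|\cdot\|_F$ is the Frobenius norm; $\alpha_{\max}=\max_t\alpha(t)$. *)

From HB Require Import structures.
From Stdlib Require Import Reals Lra Relations.
From mathcomp Require Import ssreflect ssrfun ssrbool eqtype ssrnat seq fintype bigop.

Set Implicit Arguments.
Unset Strict Implicit.
Unset Printing Implicit Defensive.

Open Scope R_scope.

HB.instance Definition _ := Monoid.isComLaw.Build R 0 Rplus (fun a b c => esym (Rplus_assoc a b c)) Rplus_comm Rplus_0_l.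

Definition vec (d : nat) := 'I_d -> R.
Definition mat (n m : nat) := 'I_n -> 'I_m -> R.

Definition dot (d : nat) (u v : vec d) : R := \big[Rplus/0]_(k < d) (u k * v k).
Definition vnorm (d : nat) (v : vec d) : R := sqrt (dot v v).

Definition vadd (d : nat) (u v : vec d) : vec d := fun k => u k + v k.
Definition vsub (d : nat) (u v : vec d) : vec d := fun k => u k - v k.
Definition vscale (d : nat) (a : R) (u : vec d) : vec d := fun k => a * u k.

Definition convex_fun (d : nat) (f : vec d -> R) : Prop :=
  forall (x y : vec d) (l : R), 0 <= l <= 1 ->
    f (vadd (vscale l x) (vscale (1 - l) y)) <= l * f x + (1 - l) * f y.

Definition convex_vset (d : nat) (Om : vec d -> Prop) : Prop :=
  forall (x y : vec d) (l : R), Om x -> Om y -> 0 <= l <= 1 ->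
    Om (vadd (vscale l x) (vscale (1 - l) y)).

Definition closed_vset (d : nat) (Om : vec d -> Prop) : Prop :=
  forall (u : nat -> vec d) (y : vec d),
    (forall m, Om (u m)) ->
    (forall eps, 0 < eps -> exists N, forall m, (N <= m)%nat -> vnorm (vsub (u m) y) < eps) ->
    Om y.

Definition is_subgradient (d : nat) (f : vec d -> R) (x g : vec d) : Prop :=
  forall y : vec d, f x + dot g (vsub y x) <= f y.

Definition is_proj (d : nat) (Om : vec d -> Prop) (x p : vec d) : Prop :=
  Om p /\ forall y, Om y -> vnorm (vsub x p) <= vnorm (vsub x y).

Definition mmul (n d : nat) (W : mat n n) (Y : mat n d) : mat n d :=
  fun i k => \big[Rplus/0]_(j < n) (W i j * Y j k).

Definition frob (n d : nat) (M : mat n d) : R :=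
  sqrt (\big[Rplus/0]_(i < n) \big[Rplus/0]_(k < d) (M i k * M i k)).

Definition row_avg (n d : nat) (X : mat n d) : vec d :=
  fun k => / INR n * \big[Rplus/0]_(i < n) X i k.
Definition consensus_err (n d : nat) (X : mat n d) : mat n d :=
  fun i k => X i k - row_avg X k.

Definition doubly_stochastic (n : nat) (W : mat n n) : Prop :=
  (forall i j, 0 <= W i j) /\
  (forall i, \big[Rplus/0]_(j < n) W i j = 1) /\
  (forall j, \big[Rplus/0]_(i < n) W i j = 1).

Definition strongly_connected (n : nat) (W : mat n n) : Prop :=
  forall i j : 'I_n, clos_refl_trans 'I_n (fun a b => 0 < W a b) i j.

Definition orthogonal_mat (n : nat) (Q : mat n n) : Prop :=
  forall i j, \big[Rplus/0]_(k < n) (Q k i * Q k j) = if i == j then 1 else 0.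

Definition singular_values (n : nat) (W : mat n n) (s : 'I_n -> R) : Prop :=
  (exists U V : mat n n, orthogonal_mat U /\ orthogonal_mat V /\
     forall i j, W i j = \big[Rplus/0]_(k < n) (U i k * s k * V j k)) /\
  (forall k, 0 <= s k) /\
  (forall k l : 'I_n, (k <= l)%nat -> s l <= s k).

Definition second_singular_value (n : nat) (hn : (1 < n)%nat) (W : mat n n) (sigma : R) : Prop :=
  exists s, singular_values W s /\ sigma = s (Ordinal hn).

Definition psum (u : nat -> R) (a b : nat) : R := \big[Rplus/0]_(a <= k < b.+1) u k.

(* The consensus error e(t) = ||x(t) - 1 xbar(t)||_F obeys
   e(t+1) <= sigma (e(t) + sqrt n alpha(t) L): a doubly stochastic W contracts
   mean-zero columns by its second singular value sigma (when sigma < 1 the top right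
   singular vector is forced to be the normalized all-ones vector), and since the rows
   stay in Omega the projection step moves each row by at most alpha(t) L.  As e(1) = 0,
   e(t) <= sqrt n L sum_(k < t) sigma^(t-k) alpha(k).  Split this sum at t/2: the recent
   terms add up to at most sigma C' alpha(t) / (1 - sigma) because alpha is nonincreasing
   and alpha(t/2) <= C' alpha(t), while the old ones, at most t alpha_max in total, are
   damped by sigma^(t/2) <= exp(-(1 - sigma) t / 2), which the lower bound on t (with
   c = 2) turns into another C' alpha(t) / (1 - sigma). *)

From HB Require Import structures.
From Stdlib Require Import Reals Lra Psatz FunctionalExtensionality.
From mathcomp Require Import ssreflect ssrfun ssrbool eqtype ssrnat seq fintype bigop.
From mathcomp Require Import zify.
Open Scope R_scope.
Set Implicit Arguments.
Unset Strict Implicit.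

Notation "\sum_ ( i < n ) F" := (\big[Rplus/0]_(i < n) F) : R_scope.
Notation "\sum_ ( i : I ) F" := (\big[Rplus/0]_(i : I) F) : R_scope.
Notation "\sum_ ( i | P ) F" := (\big[Rplus/0]_(i | P) F) : R_scope.

HB.instance Definition _ := Monoid.isMulLaw.Build R 0 Rmult Rmult_0_l Rmult_0_r.
HB.instance Definition _ :=
  Monoid.isAddLaw.Build R Rmult Rplus Rmult_plus_distr_r Rmult_plus_distr_l.

Section RealSums.
Variable I : finType.
Implicit Types F G : I -> R.

Lemma leR_sum F G : (forall i, F i <= G i) -> \sum_(i : I) F i <= \sum_(i : I) G i.
Proof.
move=> FG; apply: (big_ind2 (fun u v => u <= v)) => [|*|i _]; [lra | lra | exact: FG].
Qed.

Lemma sumR_ge0 (P : pred I) F : (forall i, 0 <= F i) -> 0 <= \sum_(i | P i) F i.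
Proof.
move=> F0; apply: (big_ind (fun u => 0 <= u)) => [|*|i _]; [lra | lra | exact: F0].
Qed.

Lemma sumR_sqr_ge0 F : 0 <= \sum_(i : I) F i ^ 2.
Proof. by apply: sumR_ge0 => i; apply: pow2_ge_0. Qed.

Lemma sumR_term_le F j : (forall i, 0 <= F i) -> F j <= \sum_(i : I) F i.
Proof.
move=> F0; rewrite (bigD1 j) //=.
have := sumR_ge0 (fun i => i != j) F0; lra.
Qed.

Lemma sumR_eq0 F : (forall i, 0 <= F i) -> \sum_(i : I) F i = 0 -> forall j, F j = 0.
Proof. by move=> F0 S0 j; have := sumR_term_le j F0; have := F0 j; lra. Qed.

Lemma sumR_delta F (k : I) : \sum_(l : I) (F l * (if k == l then 1 else 0)) = F k.
Proof.
rewrite (bigD1 k) //= eqxx big1 => [|i /negbTE ik]; first ring.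
by rewrite eq_sym ik; ring.
Qed.

Lemma sumR_sqr_expand F G l :
  \sum_(i : I) (F i - l * G i) ^ 2 =
  \sum_(i : I) F i ^ 2 - 2 * l * \sum_(i : I) (F i * G i) + l ^ 2 * \sum_(i : I) G i ^ 2.
Proof.
rewrite (eq_bigr (fun i => F i ^ 2 + - (2 * l) * (F i * G i) + l ^ 2 * G i ^ 2));
  last by move=> i _; ring.
by rewrite !big_split /= -!big_distrr /=; ring.
Qed.

Lemma discriminant_le A B C :
  0 <= B -> (forall l, 0 <= A - 2 * l * C + l ^ 2 * B) -> C ^ 2 <= A * B.
Proof.
move=> B0 quad.
have [Beq0|Bn0] := Req_dec B 0.
  have [->|Cn0] := Req_dec C 0; first by have := quad 0; nra.
  have := quad ((A + 1) / (2 * C)); rewrite Beq0.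
  have -> : A - 2 * ((A + 1) / (2 * C)) * C + ((A + 1) / (2 * C)) ^ 2 * 0 = -1 by field.
  lra.
have := quad (C / B).
have -> : A - 2 * (C / B) * C + (C / B) ^ 2 * B = (A * B - C ^ 2) / B by field.
move=> h; have : 0 <= (A * B - C ^ 2) / B * B by apply: Rmult_le_pos; lra.
have -> : (A * B - C ^ 2) / B * B = A * B - C ^ 2 by field.
lra.
Qed.

Lemma cauchy_schwarz F G :
  (\sum_(i : I) (F i * G i)) ^ 2 <= (\sum_(i : I) F i ^ 2) * \sum_(i : I) G i ^ 2.
Proof.
apply: discriminant_le; first exact: sumR_sqr_ge0.
by move=> l; rewrite -sumR_sqr_expand; apply: sumR_sqr_ge0.
Qed.

Lemma sqrt_add_cross_le A B C :
  0 <= A -> 0 <= B -> C ^ 2 <= A * B -> sqrt (A + 2 * C + B) <= sqrt A + sqrt B.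
Proof.
move=> A0 B0 CAB.
have sA := sqrt_pos A; have sB := sqrt_pos B.
have C_le : C <= sqrt A * sqrt B.
  rewrite -sqrt_mult //.
  have [C0|C0] := Rle_lt_dec C 0; first by have := sqrt_pos (A * B); lra.
  by rewrite -(sqrt_pow2 C); [apply: sqrt_le_1_alt | lra].
rewrite -(sqrt_square (sqrt A + sqrt B)); last lra.
apply: sqrt_le_1_alt.
have := sqrt_sqrt A A0; have := sqrt_sqrt B B0; nra.
Qed.

Lemma minkowski F G :
  sqrt (\sum_(i : I) (F i + G i) ^ 2) <=
  sqrt (\sum_(i : I) F i ^ 2) + sqrt (\sum_(i : I) G i ^ 2).
Proof.
have -> : \sum_(i : I) (F i + G i) ^ 2 =
  \sum_(i : I) F i ^ 2 + 2 * \sum_(i : I) (F i * G i) + \sum_(i : I) G i ^ 2.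
  rewrite (eq_bigr (fun i => F i ^ 2 + 2 * (F i * G i) + G i ^ 2)); last by move=> i _; ring.
  by rewrite !big_split /= -big_distrr.
by apply: sqrt_add_cross_le; [exact: sumR_sqr_ge0 | exact: sumR_sqr_ge0 | exact: cauchy_schwarz].
Qed.

Lemma sqr_convex_comb_le (w z : I -> R) :
  (forall j, 0 <= w j) -> \sum_(j : I) w j = 1 ->
  (\sum_(j : I) (w j * z j)) ^ 2 <= \sum_(j : I) (w j * z j ^ 2).
Proof.
move=> w0 w1; set m := \sum_(j : I) (w j * z j).
have : 0 <= \sum_(j : I) (w j * (z j - m) ^ 2).
  by apply: sumR_ge0 => j; have := w0 j; have := pow2_ge_0 (z j - m); nra.
have -> : \sum_(j : I) (w j * (z j - m) ^ 2) =
  \sum_(j : I) (w j * z j ^ 2) - 2 * m * \sum_(j : I) (w j * z j) + m ^ 2 * \sum_(j : I) w j.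
  rewrite (eq_bigr (fun j => w j * z j ^ 2 + - (2 * m) * (w j * z j) + m ^ 2 * w j));
    last by move=> j _; ring.
  by rewrite !big_split /= -!big_distrr /=; ring.
by rewrite w1 -/m; lra.
Qed.

End RealSums.

Lemma sumR_const n c : \sum_(i < n) c = INR n * c.
Proof.
elim: n => [|n IH]; first by rewrite big_ord0 /=; ring.
by rewrite big_ord_recr /= IH; case: n {IH} => [|n] /=; ring.
Qed.

Definition coords n (V : mat n n) (z : 'I_n -> R) (k : 'I_n) : R :=
  \sum_(j < n) (V j k * z j).

Lemma orthogonal_mat_norm n (M : mat n n) (b : 'I_n -> R) : orthogonal_mat M ->
  \sum_(i < n) (\sum_(k < n) (M i k * b k)) ^ 2 = \sum_(k < n) b k ^ 2.
Proof.
move=> M_orth.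
under eq_bigr => i _ do rewrite /= Rmult_1_r big_distrlr /=.
rewrite exchange_big /=; apply: eq_bigr => k _.
rewrite Rmult_1_r exchange_big /= -(sumR_delta (fun l => b k * b l) k).
apply: eq_bigr => l _; rewrite -M_orth big_distrr /=.
by apply: eq_bigr => i _; ring.
Qed.

Lemma bessel_ineq n (V : mat n n) (z : 'I_n -> R) : orthogonal_mat V ->
  \sum_(k < n) coords V z k ^ 2 <= \sum_(j < n) z j ^ 2.
Proof.
move=> V_orth.
have := sumR_sqr_ge0 (fun j => z j - 1 * \sum_(k < n) (V j k * coords V z k)).
rewrite sumR_sqr_expand (orthogonal_mat_norm _ V_orth).
have -> : \sum_(j < n) (z j * \sum_(k < n) (V j k * coords V z k)) =
          \sum_(k < n) coords V z k ^ 2.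
  under eq_bigr => j _ do rewrite big_distrr /=.
  rewrite exchange_big /=; apply: eq_bigr => k _.
  rewrite /= Rmult_1_r /coords big_distrl /=.
  by apply: eq_bigr => j _; ring.
rewrite /=; lra.
Qed.

Lemma doubly_stochastic_nonexpansive n (W : mat n n) (z : 'I_n -> R) :
  doubly_stochastic W ->
  \sum_(i < n) (\sum_(j < n) (W i j * z j)) ^ 2 <= \sum_(j < n) z j ^ 2.
Proof.
move=> [W0 [Wrow Wcol]].
apply: Rle_trans (leR_sum (G := fun i => \sum_(j < n) (W i j * z j ^ 2)) _) _.
  by move=> i; apply: sqr_convex_comb_le.
rewrite exchange_big /=; apply: Req_le; apply: eq_bigr => j _.
by rewrite -big_distrl /= Wcol; ring.
Qed.

Section SingularValueDecomposition.
Variables (n : nat) (W U V : mat n n) (s : 'I_n -> R).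
Hypotheses (U_orth : orthogonal_mat U) (V_orth : orthogonal_mat V)
  (W_svd : forall i j, W i j = \sum_(k < n) (U i k * s k * V j k)).

Lemma svd_norm (z : 'I_n -> R) :
  \sum_(i < n) (\sum_(j < n) (W i j * z j)) ^ 2 = \sum_(k < n) (s k * coords V z k) ^ 2.
Proof.
rewrite -(orthogonal_mat_norm (fun k => s k * coords V z k) U_orth).
apply: eq_bigr => i _; congr (_ ^ 2).
under eq_bigr => j _ do rewrite W_svd big_distrl /=.
rewrite exchange_big /=; apply: eq_bigr => k _.
rewrite /coords !big_distrr /=; apply: eq_bigr => j _; ring.
Qed.

Hypotheses (W_ds : doubly_stochastic W) (n_gt1 : (1 < n)%nat).
Hypotheses (s_ge0 : forall k, 0 <= s k) (s_sorted : forall k l : 'I_n, (k <= l)%nat -> s l <= s k).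
Let k0 : 'I_n := Ordinal (ltnW n_gt1).
Let k1 : 'I_n := Ordinal n_gt1.
Hypothesis s1_lt1 : s k1 < 1.

Lemma coords_column (k : 'I_n) : coords V (fun j => V j k) =1 fun l => if k == l then 1 else 0.
Proof. by move=> l; rewrite /coords V_orth eq_sym. Qed.

Lemma top_singular_value_le1 : s k0 ^ 2 <= 1.
Proof.
have := doubly_stochastic_nonexpansive (fun j => V j k0) W_ds.
rewrite svd_norm (eq_bigr (fun k => s k ^ 2 * (if k0 == k then 1 else 0))); last first.
  by move=> k _; rewrite coords_column; case: (k0 == k); ring.
rewrite sumR_delta (eq_bigr (fun j => V j k0 * V j k0)) => [|j _]; last ring.
by rewrite V_orth eqxx.
Qed.

Lemma sum_sqr_singular_le (c : 'I_n -> R) :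
  \sum_(k < n) (s k * c k) ^ 2 <= s k1 ^ 2 * \sum_(k < n) c k ^ 2 + (1 - s k1 ^ 2) * c k0 ^ 2.
Proof.
rewrite -(sumR_delta (fun k => c k ^ 2) k0) big_distrr big_distrr -big_split /=.
apply: leR_sum => k; case: eqP => [<-|k_neq].
  by have := top_singular_value_le1; have := pow2_ge_0 (c k0); nra.
have k_ge1 : (1 <= k)%nat.
  by case: k k_neq => [[|m] ?] // k_neq; exfalso; apply: k_neq; apply: val_inj.
have sk_le : s k ^ 2 <= s k1 ^ 2.
  by have := s_sorted (k := k1) k_ge1; have := s_ge0 k; nra.
by have := pow2_ge_0 (c k); nra.
Qed.

(* Comparing ||W 1||^2 = n with [sum_sqr_singular_le] and Bessel gives <V_k0, 1>^2 >= n, the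
   equality case of Cauchy-Schwarz: 1 is parallel to the top right singular vector V_k0. *)
Lemma top_right_singular_vector_const j : coords V (fun _ => 1) k0 * V j k0 = 1.
Proof.
set c := coords V (fun _ => 1).
have sum1 : \sum_(j < n) (fun _ : 'I_n => 1) j ^ 2 = INR n.
  by rewrite (eq_bigr (fun _ => 1)) => [|? _]; [rewrite sumR_const; ring | ring].
have W1 : \sum_(k < n) (s k * c k) ^ 2 = INR n.
  rewrite -svd_norm -sum1; apply: eq_bigr => i _.
  by case: W_ds => _ [Wrow _]; rewrite (eq_bigr (fun j => W i j)) ?Wrow //; move=> *; ring.
have c0_ge : INR n <= c k0 ^ 2.
  have := sum_sqr_singular_le c; have := bessel_ineq (fun _ => 1) V_orth.
  rewrite sum1 W1 -/c => bessel_c singular_c.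
  have s1_sqr : 0 <= s k1 ^ 2 < 1 by have := s_ge0 k1; split; nra.
  have : s k1 ^ 2 * \sum_(k < n) c k ^ 2 <= s k1 ^ 2 * INR n.
    by apply: Rmult_le_compat_l; lra.
  move=> h; apply: (Rmult_le_reg_l (1 - s k1 ^ 2)); lra.
have dev0 : \sum_(j < n) (c k0 * V j k0 - 1 * 1) ^ 2 = 0.
  apply: Rle_antisym; last exact: sumR_sqr_ge0.
  rewrite sumR_sqr_expand sum1.
  have -> : \sum_(j < n) (c k0 * V j k0) ^ 2 = c k0 ^ 2.
    rewrite (eq_bigr (fun j => c k0 ^ 2 * (V j k0 * V j k0))) => [|? _]; last ring.
    by rewrite -big_distrr V_orth eqxx /=; ring.
  have -> : \sum_(j < n) (c k0 * V j k0 * 1) = c k0 * c k0.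
    rewrite (eq_bigr (fun j => c k0 * (V j k0 * 1))) => [|? _]; last ring.
    by rewrite -big_distrr.
  nra.
have := sumR_eq0 (fun j => pow2_ge_0 _) dev0 j; rewrite /=; nra.
Qed.

Lemma coords_top_eq0 (z : 'I_n -> R) : \sum_(j < n) z j = 0 -> coords V z k0 = 0.
Proof.
move=> z0; set c := coords V (fun _ => 1) k0.
have c_neq0 : c <> 0.
  by move=> c0; have := top_right_singular_vector_const k0; rewrite -/c c0; lra.
apply: (Rmult_eq_reg_l c) => //.
have -> : c * coords V z k0 = \sum_(j < n) z j.
  rewrite /coords big_distrr; apply: eq_bigr => j _ /=.
  by rewrite -[RHS]Rmult_1_l -(top_right_singular_vector_const j) -/c; ring.
by rewrite z0 Rmult_0_r.
Qed.

Lemma svd_contraction (z : 'I_n -> R) : \sum_(j < n) z j = 0 ->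
  \sum_(i < n) (\sum_(j < n) (W i j * z j)) ^ 2 <= s k1 ^ 2 * \sum_(j < n) z j ^ 2.
Proof.
move=> z0; rewrite svd_norm.
have := sum_sqr_singular_le (coords V z); rewrite coords_top_eq0 //.
have := bessel_ineq z V_orth; have := pow2_ge_0 (s k1); nra.
Qed.

End SingularValueDecomposition.

Lemma doubly_stochastic_contraction n (hn : (1 < n)%nat) (W : mat n n) sigma (z : 'I_n -> R) :
  doubly_stochastic W -> second_singular_value hn W sigma -> sigma < 1 ->
  \sum_(j < n) z j = 0 ->
  \sum_(i < n) (\sum_(j < n) (W i j * z j)) ^ 2 <= sigma ^ 2 * \sum_(j < n) z j ^ 2.
Proof.
move=> W_ds [s [[[U [V [U_orth [V_orth W_svd]]]] [s_ge0 s_sorted]] ->]] s1_lt1.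
exact: (svd_contraction U_orth V_orth W_svd W_ds s_ge0 s_sorted s1_lt1).
Qed.

Lemma second_singular_value_ge0 n (hn : (1 < n)%nat) (W : mat n n) sigma :
  second_singular_value hn W sigma -> 0 <= sigma.
Proof. by case=> s [[_ [s_ge0 _]] ->]. Qed.

Lemma dot_self_ge0 d (u : vec d) : 0 <= dot u u.
Proof. by apply: sumR_ge0 => k; nra. Qed.

Lemma vnorm_sqr d (u : vec d) : vnorm u ^ 2 = \sum_(k < d) u k ^ 2.
Proof.
rewrite /vnorm /= Rmult_1_r sqrt_sqrt; last exact: dot_self_ge0.
by apply: eq_bigr => k _; ring.
Qed.

Lemma proj_variational d (Om : vec d -> Prop) (v x p : vec d) :
  convex_vset Om -> Om x -> is_proj Om v p ->
  \sum_(k < d) ((v k - p k) * (x k - p k)) <= 0.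
Proof.
move=> Om_conv Om_x [Om_p p_min].
set P := \sum_(k < d) _; set Q := \sum_(k < d) (x k - p k) ^ 2.
have Q_ge0 : 0 <= Q by exact: sumR_sqr_ge0.
have step l : 0 < l <= 1 -> 2 * l * P <= l ^ 2 * Q.
  move=> l01; have Om_l := Om_conv x p l Om_x Om_p (conj (Rlt_le _ _ (proj1 l01)) (proj2 l01)).
  have := p_min _ Om_l; rewrite /vnorm => /sqrt_le_0.
  rewrite /dot /vsub /vadd /vscale => /(_ (dot_self_ge0 _) (dot_self_ge0 _)).
  rewrite [X in _ <= X -> _](eq_bigr (fun k => (v k - p k - l * (x k - p k)) ^ 2)) => [|k _];
    last ring.
  rewrite [X in X <= _ -> _](eq_bigr (fun k => (v k - p k) ^ 2)) => [|k _]; last ring.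
  by rewrite sumR_sqr_expand /= -/P -/Q; lra.
have [//|P_pos] := Rle_lt_dec P 0.
(* For l = P / (P + Q), [step] reads 2 P (P + Q) <= P Q, impossible when P > 0. *)
have PQ_pos : 0 < P + Q by lra.
have l01 : 0 < P / (P + Q) <= 1.
  split; first exact: Rdiv_lt_0_compat.
  by apply: (Rmult_le_reg_r (P + Q)) => //; field_simplify; lra.
have l_eq : P / (P + Q) * (P + Q) = P by field; lra.
have := step _ l01; move: l01 l_eq; set l := P / (P + Q) => l01 l_eq le_l.
have : 2 * P <= l * Q by apply: (Rmult_le_reg_l l); nra.
nra.
Qed.

Lemma proj_dist_le d (Om : vec d -> Prop) (v x p : vec d) :
  convex_vset Om -> Om x -> is_proj Om v p ->
  \sum_(k < d) (p k - x k) ^ 2 <= \sum_(k < d) (v k - x k) ^ 2.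
Proof.
move=> Om_conv Om_x proj_p.
have variational := proj_variational Om_conv Om_x proj_p.
rewrite [X in _ <= X](eq_bigr (fun k => (v k - p k - 1 * (x k - p k)) ^ 2)) => [|k _];
  last ring.
rewrite [X in X <= _](eq_bigr (fun k => (x k - p k) ^ 2)) => [|k _]; last ring.
rewrite sumR_sqr_expand /=.
by move: variational; have := sumR_sqr_ge0 (fun k => v k - p k); rewrite /=; lra.
Qed.

Lemma convex_vset_comb d (Om : vec d -> Prop) m (w : 'I_m -> R) (p : 'I_m -> vec d) :
  convex_vset Om -> (forall j, 0 <= w j) -> \sum_(j < m) w j = 1 -> (forall j, Om (p j)) ->
  Om (fun k => \sum_(j < m) (w j * p j k)).
Proof.
move=> Om_conv; elim: m w p => [|m IH] w p w_ge0 w_sum1 Om_p.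
  by rewrite big_ord0 in w_sum1; lra.
rewrite big_ord_recr /= in w_sum1.
set w' := fun j : 'I_m => w (widen_ord (leqnSn m) j).
set p' := fun j : 'I_m => p (widen_ord (leqnSn m) j).
have w'_ge0 j : 0 <= w' j by apply: w_ge0.
have w'_sum : \sum_(j < m) w' j = 1 - w ord_max by rewrite /w' /=; lra.
have comb_eq : (fun k => \sum_(j < m.+1) (w j * p j k)) =
               (fun k => \sum_(j < m) (w' j * p' j k) + w ord_max * p ord_max k).
  by apply: functional_extensionality => k; rewrite big_ord_recr.
rewrite comb_eq; have [w_max1|w_max_neq1] := Req_dec (w ord_max) 1.
  have w'0 := sumR_eq0 w'_ge0 (etrans w'_sum (Rminus_diag_eq _ _ (esym w_max1))).
  have -> : (fun k => \sum_(j < m) (w' j * p' j k) + w ord_max * p ord_max k) = p ord_max.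
    apply: functional_extensionality => k.
    by rewrite big1 ?w_max1 => [|j _]; [ring | rewrite w'0; ring].
  exact: Om_p.
have w_max_lt1 : w ord_max < 1.
  by have := sumR_ge0 predT w'_ge0; rewrite w'_sum; lra.
have Om_q : Om (fun k => \sum_(j < m) (w' j / (1 - w ord_max) * p' j k)).
  apply: IH => [j | | j]; last exact: Om_p.
    by apply: Rmult_le_pos => //; apply/Rlt_le/Rinv_0_lt_compat; lra.
  rewrite -big_distrl /= w'_sum; field; lra.
have := Om_conv _ _ (w ord_max) (Om_p ord_max) Om_q (conj (w_ge0 ord_max) (Rlt_le _ _ w_max_lt1)).
congr Om; apply: functional_extensionality => k.
rewrite /vadd /vscale big_distrr Rplus_comm /=; congr (_ + _).
by apply: eq_bigr => j _; field; lra.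
Qed.

Lemma frob_add_le n d (A B : mat n d) : frob (fun i k => A i k + B i k) <= frob A + frob B.
Proof.
have frob_pair (M : mat n d) : frob M = sqrt (\sum_(ik : 'I_n * 'I_d) M ik.1 ik.2 ^ 2).
  by rewrite /frob pair_big /=; congr sqrt; apply: eq_bigr => ik _; ring.
by rewrite !frob_pair; apply: minkowski.
Qed.

Lemma frob_le_rows n d (D : mat n d) r : 0 <= r ->
  (forall i, \sum_(k < d) D i k ^ 2 <= r ^ 2) -> frob D <= sqrt (INR n) * r.
Proof.
move=> r_ge0 rows; rewrite /frob -(sqrt_pow2 r r_ge0) -sqrt_mult;
  [|exact: pos_INR | exact: pow2_ge_0].
apply: sqrt_le_1_alt; rewrite -sumR_const; apply: leR_sum => i.
by apply: Rle_trans (rows i); apply: Req_le; apply: eq_bigr => k _; ring.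
Qed.

Section ConsensusError.
Variables (n d : nat).
Hypothesis n_gt0 : (0 < n)%nat.

Lemma consensus_err_sum0 (Y : mat n d) k : \sum_(j < n) consensus_err Y j k = 0.
Proof.
have n_neq0 : INR n <> 0 by apply: not_0_INR; apply/eqP; rewrite -lt0n.
rewrite /consensus_err /row_avg.
rewrite (eq_bigr (fun j => Y j k + - (/ INR n * \sum_(i < n) Y i k))) => [|j _]; last ring.
by rewrite big_split sumR_const /=; field.
Qed.

Lemma consensus_err_mmul (W : mat n n) (Y : mat n d) i k : doubly_stochastic W ->
  consensus_err (mmul W Y) i k = \sum_(j < n) (W i j * consensus_err Y j k).
Proof.
move=> [_ [Wrow Wcol]].
have avg : row_avg (mmul W Y) k = row_avg Y k.
  rewrite /row_avg /mmul exchange_big /=; congr (_ * _); apply: eq_bigr => j _.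
  by rewrite -big_distrl /= Wcol Rmult_1_l.
rewrite /consensus_err avg.
rewrite (eq_bigr (fun j => W i j * Y j k + - row_avg Y k * W i j)) => [|j _]; last ring.
by rewrite big_split -big_distrr /= Wrow Rmult_1_r.
Qed.

Lemma frob_consensus_err_const (X : mat n d) (x0 : vec d) :
  (forall i k, X i k = x0 k) -> frob (consensus_err X) = 0.
Proof.
move=> X_rows; rewrite /frob big1 ?sqrt_0 // => i _; rewrite big1 // => k _.
rewrite /consensus_err /row_avg (eq_bigr (fun _ => x0 k)) => [|j _]; last exact: X_rows.
have n_pos : 0 < INR n by apply: lt_0_INR; apply/ltP.
by rewrite sumR_const X_rows; field_simplify; lra.
Qed.

Lemma frob_consensus_err_le (D : mat n d) : frob (consensus_err D) <= frob D.
Proof.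
apply: sqrt_le_1_alt; rewrite exchange_big [X in _ <= X]exchange_big /=.
apply: leR_sum => k; rewrite /consensus_err /row_avg.
set S := \sum_(i < n) D i k.
have n_pos : 0 < INR n by apply: lt_0_INR; apply/ltP.
have := sumR_sqr_expand (fun i => D i k) (fun _ => 1) (/ INR n * S).
rewrite [X in X = _ -> _](eq_bigr (fun i => (D i k - / INR n * S) * (D i k - / INR n * S)))
  => [|i _]; last ring.
rewrite [X in _ <= X](eq_bigr (fun i => D i k ^ 2)) => [|i _]; last ring.
move=> ->; rewrite /=.
have -> : \sum_(i < n) (D i k * 1) = S by apply: eq_bigr => i _; ring.
have -> : \sum_(i < n) (1 * (1 * 1)) = INR n.
  by rewrite (eq_bigr (fun _ => 1)) => [|i _]; [rewrite sumR_const; ring | ring].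
set u := / INR n.
have u_pos : 0 < u by apply: Rinv_0_lt_compat.
have -> : u * S * (u * S * 1) * INR n = u * S * S * (u * INR n) by ring.
rewrite [u * INR n]Rinv_l; last lra.
have : 0 <= u * (S * S) by apply: Rmult_le_pos; nra.
lra.
Qed.

Lemma frob_consensus_err_sub_le (X Y : mat n d) :
  frob (consensus_err Y) <= frob (consensus_err X) + frob (fun i k => Y i k - X i k).
Proof.
have -> : consensus_err Y =
  (fun i k => consensus_err X i k + consensus_err (fun i k => Y i k - X i k) i k).
  apply: functional_extensionality => i; apply: functional_extensionality => k.
  rewrite /consensus_err /row_avg.
  have -> : \sum_(j < n) (Y j k - X j k) = \sum_(j < n) Y j k - \sum_(j < n) X j k.
    rewrite (eq_bigr (fun j => Y j k + -1 * X j k)) => [|j _]; last ring.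
    by rewrite big_split -big_distrr /=; ring.
  ring.
apply: Rle_trans (frob_add_le _ _) _; apply: Rplus_le_compat_l.
exact: frob_consensus_err_le.
Qed.

Lemma frob_consensus_err_mmul_le (hn : (1 < n)%nat) (W : mat n n) sigma (Y : mat n d) :
  doubly_stochastic W -> second_singular_value hn W sigma -> sigma < 1 ->
  frob (consensus_err (mmul W Y)) <= sigma * frob (consensus_err Y).
Proof.
move=> W_ds W_sigma sigma_lt1.
have sigma_ge0 := second_singular_value_ge0 W_sigma.
rewrite /frob -(sqrt_pow2 sigma sigma_ge0) -sqrt_mult;
  [|exact: pow2_ge_0 | by apply: sumR_ge0 => i; apply: sumR_ge0 => k; nra].
apply: sqrt_le_1_alt; rewrite exchange_big [X in _ <= _ * X]exchange_big big_distrr.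
apply: leR_sum => k.
have := doubly_stochastic_contraction (z := fun j => consensus_err Y j k) W_ds W_sigma
  sigma_lt1 (consensus_err_sum0 Y k) => contr.
apply: (Rle_trans _ _ _ _ (Rle_trans _ _ _ contr _)); apply: Req_le.
  by apply: eq_bigr => i _; rewrite consensus_err_mmul //=; ring.
by congr (_ * _); apply: eq_bigr => j _; ring.
Qed.

End ConsensusError.

(* [discounted_sum sigma alpha j = sum_(k = 1 .. j) sigma ^ (j - k + 1) * alpha k]. *)
Fixpoint discounted_sum (sigma : R) (alpha : nat -> R) (j : nat) : R :=
  if j is j'.+1 then sigma * (discounted_sum sigma alpha j' + alpha j) else 0.

Lemma pow_mul_le1 sigma A r : 0 <= sigma < 1 -> 0 < A ->
  ln A <= (1 - sigma) * INR r -> sigma ^ r * A <= 1.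
Proof.
move=> sigma01 A_pos lnA_le.
have [sigma0|sigma_pos] : sigma = 0 \/ 0 < sigma by lra.
  case: r lnA_le => [|r] lnA_le; last by rewrite sigma0 pow_i; [lra | lia].
  rewrite /= Rmult_1_l; have [//|A_gt1] := Rle_lt_dec A 1.
  by have := ln_increasing 1 A Rlt_0_1 A_gt1; move: lnA_le; rewrite ln_1 /=; lra.
have ln_sigma : ln sigma <= sigma - 1.
  by have := exp_ineq1_le (ln sigma); rewrite exp_ln //; lra.
have [//|gt1] := Rle_lt_dec (sigma ^ r * A) 1.
have pos : 0 < sigma ^ r * A by apply: Rmult_lt_0_compat => //; apply: pow_lt.
have := ln_increasing 1 _ Rlt_0_1 gt1.
rewrite ln_1 ln_mult ?ln_pow //; last by apply: pow_lt.
have := pos_INR r; nra.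
Qed.

Section DiscountedSum.
Variables (sigma : R) (alpha : nat -> R).
Hypothesis sigma01 : 0 <= sigma < 1.
Hypothesis alpha_pos : forall k, (1 <= k)%nat -> 0 < alpha k.

Lemma discounted_sum_ge0 j : 0 <= discounted_sum sigma alpha j.
Proof.
elim: j => [|j IH] /=; first lra.
have a_pos := alpha_pos (isT : (1 <= j.+1)%nat).
by apply: Rmult_le_pos; lra.
Qed.

Lemma discounted_sum_le M j : (forall k, (1 <= k)%nat -> alpha k <= M) ->
  discounted_sum sigma alpha j <= INR j * M.
Proof.
move=> alpha_le; elim: j => [|j IH]; first by rewrite /=; lra.
have := alpha_le j.+1 isT; have := discounted_sum_ge0 j; have := alpha_pos (isT : (1 <= j.+1)%nat).
rewrite S_INR /=; nra.
Qed.

Lemma discounted_sum_shift K i0 p : (forall k, (i0 < k)%nat -> alpha k <= K) ->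
  (1 - sigma) * discounted_sum sigma alpha (i0 + p) <=
  (1 - sigma) * sigma ^ p * discounted_sum sigma alpha i0 + K * sigma * (1 - sigma ^ p).
Proof.
move=> alpha_le; elim: p => [|p IH]; first by rewrite addn0 /=; lra.
rewrite addnS /=.
have := alpha_le (i0 + p).+1 (leq_trans (ltnSn i0) (leq_addr p i0.+1)).
move: IH; set S := discounted_sum _ _ (i0 + p); set S0 := discounted_sum _ _ i0.
set a := alpha _; set q := sigma ^ p => IH a_le.
have : sigma * ((1 - sigma) * S) <= sigma * ((1 - sigma) * q * S0 + K * sigma * (1 - q)).
  by apply: Rmult_le_compat_l; lra.
have : sigma * (1 - sigma) * a <= sigma * (1 - sigma) * K by apply: Rmult_le_compat_l; nra.
lra.
Qed.

(* The sum itself is crudely at most t M; the lower bound on t lets the damping factor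
   sigma ^ r absorb that. *)
Lemma discounted_sum_damped M K j r t : (forall k, (1 <= k)%nat -> alpha k <= M) -> 0 < K ->
  (j <= t)%nat -> (1 <= t)%nat -> INR t <= 2 * INR r ->
  2 / (1 - sigma) * ln ((1 - sigma) * INR t * M / K) <= INR t ->
  (1 - sigma) * sigma ^ r * discounted_sum sigma alpha j <= K.
Proof.
move=> alpha_le K_pos j_le t_ge1 t_le_2r.
have M_pos : 0 < M by have := alpha_le 1%nat isT; have := alpha_pos (isT : (1 <= 1)%nat); lra.
have t_pos : 0 < INR t by apply: lt_0_INR; apply/ltP; lia.
move A_def : ((1 - sigma) * INR t * M / K) => A t_large.
have A_pos : 0 < A.
  by rewrite -A_def; apply: Rdiv_lt_0_compat => //; apply: Rmult_lt_0_compat => //; nra.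
have damped : sigma ^ r * A <= 1.
  apply: pow_mul_le1 => //.
  have -> : ln A = (1 - sigma) / 2 * (2 / (1 - sigma) * ln A) by field; lra.
  have : (1 - sigma) / 2 * (2 / (1 - sigma) * ln A) <= (1 - sigma) / 2 * INR t.
    by apply: Rmult_le_compat_l; lra.
  nra.
have sigma_r_ge0 := pow_le _ r (proj1 sigma01).
have head_le : discounted_sum sigma alpha j <= INR t * M.
  apply: Rle_trans (discounted_sum_le j alpha_le) _; apply: Rmult_le_compat_r; first lra.
  by apply/le_INR/leP.
have : (1 - sigma) * sigma ^ r * discounted_sum sigma alpha j <=
       (1 - sigma) * sigma ^ r * (INR t * M) by apply: Rmult_le_compat_l; nra.
have -> : (1 - sigma) * sigma ^ r * (INR t * M) = sigma ^ r * A * K.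
  by rewrite -A_def; field; lra.
have : sigma ^ r * A * K <= 1 * K by apply: Rmult_le_compat_r; lra.
lra.
Qed.

Lemma discounted_sum_bound M C t :
  (forall s t, (1 <= s)%nat -> (s <= t)%nat -> alpha t <= alpha s) ->
  (forall k, (1 <= k)%nat -> alpha k <= M) ->
  ((2 <= t)%nat -> alpha t./2 <= C * alpha t) -> 0 < C -> (1 <= t)%nat ->
  2 / (1 - sigma) * ln ((1 - sigma) * INR t * M / (C * alpha t)) <= INR t ->
  discounted_sum sigma alpha t.-1 <= 2 * (C * alpha t) / (1 - sigma).
Proof.
move=> alpha_mono alpha_le alpha_half C_pos t_ge1 t_large.
have K_pos : 0 < C * alpha t by apply: Rmult_lt_0_compat => //; apply: alpha_pos.
move: (C * alpha t) K_pos alpha_half t_large => K K_pos alpha_half t_large.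
apply: (Rmult_le_reg_l (1 - sigma)); first lra.
have -> : (1 - sigma) * (2 * K / (1 - sigma)) = 2 * K by field; lra.
have [t_le1|t_gt1] := leqP t 1.
  have -> : t = 1%nat by lia.
  by rewrite /=; lra.
(* Split at m = t/2: beyond m every step size is at most C alpha t, and the first m - 1
   terms are damped by sigma ^ (t - m). *)
set m := t./2; set r := (t - m)%nat.
have m_ge1 : (1 <= m)%nat by rewrite /m; lia.
have t_le_2r : INR t <= 2 * INR r.
  have : (t <= 2 * r)%nat by rewrite /r /m; lia.
  by move=> /leP /le_INR; rewrite mult_INR /=; lra.
have tail_le k : (m.-1 < k)%nat -> alpha k <= K.
  by move=> ?; apply: Rle_trans (alpha_mono m k m_ge1 _) (alpha_half _); lia.
have shift := discounted_sum_shift r tail_le.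
rewrite (_ : (m.-1 + r)%nat = t.-1) in shift; last by rewrite /r /m; lia.
have m_le_t : (m.-1 <= t)%nat by rewrite /m; lia.
have head := discounted_sum_damped alpha_le K_pos m_le_t t_ge1 t_le_2r t_large.
have : K * sigma * (1 - sigma ^ r) <= K.
  have sigma_r_le1 : sigma ^ r <= 1 by rewrite -(pow1 r); apply: pow_incr; lra.
  have sigma_r_ge0 := pow_le _ r (proj1 sigma01).
  have : sigma * (1 - sigma ^ r) <= 1 by nra.
  nra.
lra.
Qed.

End DiscountedSum.

Section ProjectedConsensusIteration.
Variables (n d : nat) (hn : (1 < n)%nat) (f : 'I_n -> vec d -> R) (L : R) (Om : vec d -> Prop).
Variables (W : mat n n) (sigma : R) (alpha : nat -> R) (x y g : nat -> mat n d).
Hypotheses (subgrad_le : forall i z h, is_subgradient (f i) z h -> vnorm h <= L)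
  (Om_conv : convex_vset Om) (W_ds : doubly_stochastic W)
  (W_sigma : second_singular_value hn W sigma) (sigma_lt1 : sigma < 1)
  (alpha_pos : forall t, (1 <= t)%nat -> 0 < alpha t)
  (x_init : exists x0 : vec d, Om x0 /\ forall i k, x 1%nat i k = x0 k)
  (g_subgrad : forall t i, (1 <= t)%nat -> is_subgradient (f i) (x t i) (g t i))
  (y_proj : forall t i, (1 <= t)%nat ->
     is_proj Om (vsub (x t i) (vscale (alpha t) (g t i))) (y t i))
  (x_step : forall t, (1 <= t)%nat -> forall i k, x t.+1 i k = mmul W (y t) i k).

Let n_gt0 : (0 < n)%nat := ltnW hn.

Lemma iterates_in_Om t : (1 <= t)%nat -> forall i, Om (x t i).
Proof.
case: x_init => x0 [Om_x0 x1]; elim: t => [//|[|t] IH] _ i.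
  by have -> : x 1%nat i = x0 by apply: functional_extensionality => k; apply: x1.
have -> : x t.+2 i = fun k => \sum_(j < n) (W i j * y t.+1 j k).
  by apply: functional_extensionality => k; rewrite x_step.
case: W_ds => W_ge0 [W_row _].
by apply: convex_vset_comb => // j; case: (y_proj j (isT : (1 <= t.+1)%nat)).
Qed.

Lemma proj_step_row_le t i : (1 <= t)%nat ->
  \sum_(k < d) (y t i k - x t i k) ^ 2 <= (alpha t * L) ^ 2.
Proof.
move=> t_ge1.
apply: Rle_trans (proj_dist_le Om_conv (iterates_in_Om t_ge1 i) (y_proj i t_ge1)) _.
rewrite (eq_bigr (fun k => alpha t ^ 2 * g t i k ^ 2)) => [|k _]; last first.
  by rewrite /vsub /vscale; ring.
rewrite -big_distrr -vnorm_sqr Rpow_mult_distr.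
apply: Rmult_le_compat_l; first exact: pow2_ge_0.
by apply: pow_incr; split; [exact: sqrt_pos | exact: subgrad_le (g_subgrad i t_ge1)].
Qed.

Lemma subgrad_bound_ge0 : 0 <= L.
Proof.
apply: Rle_trans (subgrad_le (g_subgrad (Ordinal n_gt0) (isT : (1 <= 1)%nat))).
exact: sqrt_pos.
Qed.

Lemma consensus_err_step t : (1 <= t)%nat ->
  frob (consensus_err (x t.+1)) <=
  sigma * (frob (consensus_err (x t)) + sqrt (INR n) * (alpha t * L)).
Proof.
move=> t_ge1.
have -> : x t.+1 = mmul W (y t).
  by do 2!apply: functional_extensionality => ?; rewrite x_step.
apply: Rle_trans (frob_consensus_err_mmul_le n_gt0 (y t) W_ds W_sigma sigma_lt1) _.
have sigma_ge0 := second_singular_value_ge0 W_sigma.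
apply: Rmult_le_compat_l => //.
apply: Rle_trans (frob_consensus_err_sub_le n_gt0 (x t) (y t)) _; apply: Rplus_le_compat_l.
apply: frob_le_rows => [|i]; last exact: proj_step_row_le.
by have := alpha_pos t_ge1; have := subgrad_bound_ge0; nra.
Qed.

Lemma consensus_err_le_discounted j :
  frob (consensus_err (x j.+1)) <= sqrt (INR n) * L * discounted_sum sigma alpha j.
Proof.
elim: j => [|j IH].
  case: x_init => x0 [_ x1]; rewrite (frob_consensus_err_const n_gt0 x1) /=; lra.
apply: Rle_trans (consensus_err_step (isT : (1 <= j.+1)%nat)) _.
have sigma_ge0 := second_singular_value_ge0 W_sigma.
have -> : sqrt (INR n) * L * discounted_sum sigma alpha j.+1 =
  sigma * (sqrt (INR n) * L * (discounted_sum sigma alpha j + alpha j.+1)) by rewrite /=; ring.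
by apply: Rmult_le_compat_l => //; lra.
Qed.

End ProjectedConsensusIteration.

Theorem lemma3 :
  exists c : R, 0 < c /\
  forall (n d : nat) (hn : (1 < n)%nat)
    (f : 'I_n -> vec d -> R) (L : R) (Om : vec d -> Prop)
    (W : mat n n) (sigma : R)
    (alpha : nat -> R) (Calpha Calpha' alpha_max : R)
    (x y g : nat -> mat n d),
    (forall i, convex_fun (f i)) ->
    (forall i z h, is_subgradient (f i) z h -> vnorm h <= L) ->
    convex_vset Om -> closed_vset Om ->
    doubly_stochastic W ->
    (forall i, 0 < W i i) ->
    strongly_connected W ->
    second_singular_value hn W sigma -> sigma < 1 ->
    (forall t, (1 <= t)%nat -> 0 < alpha t) ->
    (forall s t, (1 <= s)%nat -> (s <= t)%nat -> alpha t <= alpha s) ->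
    (exists l, Un_cv (fun T => psum (fun k => alpha k ^ 2) 1 T) l) ->
    cv_infty (fun T => psum alpha 1 T) ->
    (forall t, (1 <= t)%nat -> psum alpha 1 t <= Calpha * psum alpha (uphalf t) t) ->
    (forall t, (2 <= t)%nat -> alpha (t./2) <= Calpha' * alpha t) ->
    (forall t, (1 <= t)%nat -> alpha t <= alpha_max) ->
    (exists t, (1 <= t)%nat /\ alpha t = alpha_max) ->
    (exists x0 : vec d, Om x0 /\ forall i k, x 1%nat i k = x0 k) ->
    (forall t i, (1 <= t)%nat -> is_subgradient (f i) (x t i) (g t i)) ->
    (forall t i, (1 <= t)%nat ->
       is_proj Om (vsub (x t i) (vscale (alpha t) (g t i))) (y t i)) ->
    (forall t, (1 <= t)%nat -> forall i k, x t.+1 i k = mmul W (y t) i k) ->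
    forall t : nat, (1 <= t)%nat ->
      c / (1 - sigma) * ln ((1 - sigma) * INR t * alpha_max / (Calpha' * alpha t)) <= INR t ->
      frob (consensus_err (x t)) <= 2 * Calpha' * alpha t * L * sqrt (INR n) / (1 - sigma).
Proof.
exists 2; split; first lra.
move=> n d hn f L Om W sigma alpha _ C' alpha_max x y g _ subgrad_le Om_conv _ W_ds _ _
  W_sigma sigma_lt1 alpha_pos alpha_mono _ _ _ alpha_half alpha_le _ x_init g_subgrad y_proj
  x_step t t_ge1 t_large.
have sigma_ge0 := second_singular_value_ge0 W_sigma.
have L_ge0 := subgrad_bound_ge0 hn subgrad_le g_subgrad.
have C'_pos : 0 < C'.
  have /= half := alpha_half 2%nat isT.
  by have := alpha_pos 1%nat isT; have := alpha_pos 2%nat isT; nra.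
have err_le := consensus_err_le_discounted subgrad_le Om_conv W_ds W_sigma sigma_lt1 alpha_pos
  x_init g_subgrad y_proj x_step t.-1.
have sum_le := discounted_sum_bound (conj sigma_ge0 sigma_lt1) alpha_pos alpha_mono alpha_le
  (alpha_half t) C'_pos t_ge1 t_large.
rewrite prednK // in err_le; apply: Rle_trans err_le _.
have -> : 2 * C' * alpha t * L * sqrt (INR n) / (1 - sigma) =
  sqrt (INR n) * L * (2 * (C' * alpha t) / (1 - sigma)) by field; lra.
by apply: Rmult_le_compat_l => //; apply: Rmult_le_pos => //; apply: sqrt_pos.
Qed.
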